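(* Fix integers $N\ge 2$ and $K\ge 1$. Let $\mathcal{M}$ be any set of scoring tensors in $\mathbb{R}^{N\times N\times K}$ such that each $\mathcal{S}\in\mathcal{M}$ is the scoring tensor of a bilinear model of some size $r<N/32$, i.e. there exist $\mathbf{A}\in\mathbb{R}^{N\times r}$ and $\mathbf{R}_1,\dots,\mathbf{R}_K\in\mathbb{R}^{r\times r}$ with $[\mathcal{S}]_{ijk}=\mathbf{a}_i^T\mathbf{R}_k\mathbf{a}_j$ for all $i,j,k$. Then $\mathcal{M}$ is not universal, i.e. $\pi(\mathcal{M})\ne\pi(\mathbb{R}^{N\times N\times K})$.
   Context: For a real $N\times N$ matrix $\mathbf{S}$, $\pi(\mathbf{S})$ is the matrix of dense ranks: $\pi_{ij}(\mathbf{S})=1+$ (number of distinct values among entries of $\mathbf{S}$ strictly larger than $s_{ij}$). For a tensor in $\mathbb{R}^{N\times N\times K}$, $\pi$ is applied to each frontal slice (the $N\times N$ matrices obtained by fixing the third index); for a set $X$, $\pi(X)=\{\pi(x):x\in X\}$. $\mathbf{a}_i$ denotes the $i$-th row of $\mathbf{A}$. *)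

From HB Require Import structures.
From mathcomp Require Import all_boot all_order all_algebra.
From mathcomp Require Import boolp classical_sets reals.
Set Implicit Arguments. Unset Strict Implicit. Unset Printing Implicit Defensive.
Import Order.TTheory GRing.Theory Num.Theory.
Local Open Scope ring_scope.

(* A tensor in R^{N x N x K}, given by its K frontal slices (N x N matrices):
   the slice k is  T k,  and  [T]_{ijk} = T k i j. *)
Definition tensor (R : realType) (N K : nat) := {ffun 'I_K -> 'M[R]_N}.

Definition dense_rank (R : realType) (N : nat) (S : 'M[R]_N) : 'M[nat]_N :=
  \matrix_(i, j)
    (size (undup [seq S p.1 p.2 | p <- enum {: 'I_N * 'I_N} & (S i j < S p.1 p.2)%R])).+1%N.

Definition pi_tensor (R : realType) (N K : nat) (T : tensor R N K)
  : {ffun 'I_K -> 'M[nat]_N} := [ffun k => dense_rank (T k)].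

Definition pi_set (R : realType) (N K : nat) (X : set (tensor R N K))
  : set {ffun 'I_K -> 'M[nat]_N} := [set pi_tensor T | T in X].

Definition bilinear_of_size (R : realType) (N K r : nat) (S : tensor R N K) : Prop :=
  exists (A : 'M[R]_(N, r)) (Rk : 'I_K -> 'M[R]_r),
    forall (i j : 'I_N) (k : 'I_K),
      S k i j = (row i A *m Rk k *m (row j A)^T) 0 0.

From HB Require Import structures.
From mathcomp Require Import all_boot all_order all_algebra.
From mathcomp Require Import boolp classical_sets reals.
From mathcomp Require Import zify.
Set Implicit Arguments. Unset Strict Implicit. Unset Printing Implicit Defensive.
Import Order.TTheory GRing.Theory Num.Theory.
Local Open Scope ring_scope.

(* A slice a_i^T R_k a_j of a bilinear model of size r is the matrix A R_k A^T,
   of rank at most r.  If every ranking pattern were attained, so would be the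
   pattern of the identity; but a matrix ranked like the identity has the form
   (a - b) I + b J with a > b, hence rank at least N - 1 > r. *)

Section DenseRank.

Variables (R : realType) (n : nat) (S : 'M[R]_n).

Let values_above (x : R) :=
  undup [seq S p.1 p.2 | p <- enum {: 'I_n * 'I_n} & x < S p.1 p.2].

Let dense_rankE i j : dense_rank S i j = (size (values_above (S i j))).+1.
Proof. by rewrite mxE. Qed.

Lemma dense_rank_lt i j i' j' :
  S i j < S i' j' -> (dense_rank S i' j' < dense_rank S i j)%N.
Proof.
move=> lt_ij; rewrite !dense_rankE ltnS.
(* [S i' j'] and all the values above it lie above [S i j]. *)
have /uniq_leq_size : uniq (S i' j' :: values_above (S i' j')).
  rewrite /= undup_uniq andbT mem_undup; apply/mapP => -[p].
  by rewrite mem_filter => /andP[lt_p _] eq_p; rewrite eq_p ltxx in lt_p.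
apply=> z; rewrite inE /values_above !mem_undup => /predU1P[->|/mapP[p]].
  by apply/mapP; exists (i', j'); last by []; rewrite mem_filter lt_ij mem_enum.
rewrite mem_filter => /andP[lt_p _] ->; apply/mapP; exists p; last by [].
by rewrite mem_filter (lt_trans lt_ij lt_p) mem_enum.
Qed.

Lemma dense_rank_ltE i j i' j' :
  (dense_rank S i j < dense_rank S i' j')%N = (S i' j' < S i j).
Proof.
case: ltgtP => [/dense_rank_lt //|/dense_rank_lt/ltnW|eq_S].
- by rewrite leqNgt => /negPf.
- by rewrite !dense_rankE eq_S ltnn.
Qed.

Lemma dense_rank_eqE i j i' j' :
  (dense_rank S i j == dense_rank S i' j') = (S i j == S i' j').
Proof.
case: (ltgtP (S i j) (S i' j')) => [lt_S|gt_S|eq_S].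
- by rewrite gtn_eqF // dense_rank_ltE.
- by rewrite ltn_eqF // dense_rank_ltE.
- by rewrite !dense_rankE eq_S eqxx.
Qed.

End DenseRank.

Section RankBounds.

Variable F : fieldType.

Lemma mxrank_const_mx m n (b : F) : (\rank (const_mx b : 'M[F]_(m, n)) <= 1)%N.
Proof.
have -> : const_mx b = (const_mx b : 'cV[F]_m) *m (const_mx 1 : 'rV[F]_n).
  by apply/matrixP => i j; rewrite !mxE big_ord1 !mxE mulr1.
exact: leq_trans (mxrankM_maxr _ _) (rank_leq_row _).
Qed.

Lemma mxrank_scalar_add_const n (c b : F) :
  c != 0 -> (n <= \rank (c%:M + const_mx b : 'M[F]_n)%R + 1)%N.
Proof.
move=> c_neq0; set X := (c%:M + const_mx b)%R.
have rank_c : \rank (c%:M : 'M[F]_n) = n.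
  by rewrite -scalemx1 mxrank_scale_nz // mxrank1.
rewrite -{1}rank_c.
have -> : c%:M = X - const_mx b by rewrite addrK.
apply: leq_trans (mxrank_add _ _) _.
by rewrite mxrank_opp leq_add2l mxrank_const_mx.
Qed.

End RankBounds.

Section IdentityPattern.

Variables (R : realType) (n : nat) (X : 'M[R]_n).
Hypothesis X_pattern : dense_rank X = dense_rank (1%:M : 'M[R]_n).

Lemma dense_rank_eq1_eqE i j i' j' : (X i j == X i' j') = ((i == j) == (i' == j')).
Proof.
rewrite -(dense_rank_eqE X) X_pattern dense_rank_eqE !mxE eqr_nat.
by case: (i == j); case: (i' == j').
Qed.

Lemma dense_rank_eq1_ltE i j i' j' : (X i j < X i' j') = (i != j) && (i' == j').
Proof.
rewrite -(dense_rank_ltE X) X_pattern dense_rank_ltE !mxE ltr_nat.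
by case: (i == j); case: (i' == j').
Qed.

Lemma dense_rank_eq1_decomp i0 i1 : i0 != i1 ->
  X = (X i0 i0 - X i0 i1)%:M + const_mx (X i0 i1) /\ X i0 i1 < X i0 i0.
Proof.
move=> i01; split; last by rewrite dense_rank_eq1_ltE i01 eqxx.
apply/matrixP => i j; rewrite !mxE; case: eqVneq => [->|ij].
  by rewrite mulr1n subrK; apply/eqP; rewrite dense_rank_eq1_eqE !eqxx.
by rewrite mulr0n add0r; apply/eqP; rewrite dense_rank_eq1_eqE (negPf ij) (negPf i01).
Qed.

Lemma dense_rank_eq1_mxrank : (1 < n)%N -> (n <= \rank X + 1)%N.
Proof.
move=> n_gt1.
have [X_eq lt_X] :=
  dense_rank_eq1_decomp (i0 := Ordinal (ltnW n_gt1)) (i1 := Ordinal n_gt1) isT.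
by rewrite X_eq mxrank_scalar_add_const // subr_eq0 gt_eqF.
Qed.

End IdentityPattern.

Lemma bilinear_of_size_mxrank (R : realType) (N K r : nat) (S : tensor R N K) :
  bilinear_of_size r S -> forall k, (\rank (S k) <= r)%N.
Proof.
move=> [A [Rk S_bil]] k; have -> : S k = A *m Rk k *m A^T.
  apply/matrixP => i j; rewrite S_bil !mxE; apply: eq_bigr => l _; rewrite !mxE.
  by congr (_ * _); apply: eq_bigr => m _; rewrite !mxE.
exact: leq_trans (mxrankM_maxl _ _) (leq_trans (mxrankM_maxl _ _) (rank_leq_col A)).
Qed.

Theorem corollary3 (R : realType) (N K : nat) (hN : (2 <= N)%N) (hK : (1 <= K)%N)
  (M : set (tensor R N K)) :
  (forall S, M S -> exists r : nat, (r%:R < N%:R / 32 :> R) /\ bilinear_of_size r S) ->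
  pi_set M <> pi_set [set: tensor R N K].
Proof.
move=> M_bil pi_M_full.
pose Id : tensor R N K := [ffun => 1%:M].
have [T MT piT] : pi_set M (pi_tensor Id) by rewrite pi_M_full; exists Id.
have [r [r_small T_bil]] := M_bil T MT.
pose k0 : 'I_K := Ordinal hK.
have T_pattern : dense_rank (T k0) = dense_rank (1%:M : 'M[R]_N).
  by have := congr1 (fun f : {ffun _ -> _} => f k0) piT; rewrite /= !ffunE.
have := dense_rank_eq1_mxrank T_pattern hN.
have := bilinear_of_size_mxrank T_bil k0.
have : (r * 32 < N)%N by rewrite -(ltr_nat R) natrM -ltr_pdivlMr.
lia.
Qed.
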